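(* For every integers $d \geq 2$ and $s,t \geq 1$, $$\tfrac{s}{s+t}\mathsf {Brac}_{d,s}+\tfrac{t}{s+t}\mathsf {Brac}_{d,t}\subseteq \mathsf {Brac}_{d,s+t},$$ i.e. if $(\alpha,\beta)\in\mathsf{Brac}_{d,s}$ and $(\mu,\nu)\in\mathsf{Brac}_{d,t}$ then $\big(\tfrac{s\alpha+t\mu}{s+t},\tfrac{s\beta+t\nu}{s+t}\big)\in\mathsf{Brac}_{d,s+t}$.
   Context: $\Delta_d=\{\alpha\in\mathbb R^d:\alpha_i\ge0,\ \sum_i\alpha_i=1\}$. For $s\ge1$, $\mathsf{Brac}_{d,s}$ is the set of $(\alpha,\beta)\in\Delta_d^2$ for which there exist $A_1,\dots,A_d,B_1,\dots,B_d\in M_s(\mathbb C)$ with $\sum_i A_iA_i^*=\sum_iB_iB_i^*=I_s$, $\sum_iA_iB_i^*=0$, and $\tfrac1s\|A_i\|_F^2=\alpha_i$, $\tfrac1s\|B_i\|_F^2=\beta_i$ for all $i\in[d]$, where $\|X\|_F=\operatorname{Tr}(XX^* )^{1/2}$. *)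

From HB Require Import structures.
From mathcomp Require Import all_boot all_order all_algebra.
From mathcomp Require Import complex.
From mathcomp Require Import reals.
Set Implicit Arguments. Unset Strict Implicit. Unset Printing Implicit Defensive.
Import Order.TTheory GRing.Theory Num.Theory ComplexField.
Local Open Scope ring_scope.
Local Open Scope complex_scope.

Definition adjmx (R : rcfType) m n (A : 'M[R[i]]_(m, n)) : 'M[R[i]]_(n, m) :=
  map_mx conjc (A^T).

Definition simplex (R : realType) (d : nat) (a : 'I_d -> R) : Prop :=
  (forall i, 0 <= a i) /\ \sum_(i < d) a i = 1.

(* Brac_{d,s}: the set of (alpha, beta) in Delta_d^2 realized by
   s x s complex matrices A_1..A_d, B_1..B_d with
   sum A_i A_i^* = sum B_i B_i^* = I, sum A_i B_i^* = 0,
   and (1/s)||A_i||_F^2 = alpha_i, (1/s)||B_i||_F^2 = beta_i. *)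
Definition Brac (R : realType) (d s : nat) (a b : 'I_d -> R) : Prop :=
  simplex a /\ simplex b /\
  exists (A B : 'I_d -> 'M[R[i]]_s),
    \sum_(i < d) A i *m adjmx (A i) = 1%:M /\
    \sum_(i < d) B i *m adjmx (B i) = 1%:M /\
    \sum_(i < d) A i *m adjmx (B i) = 0 /\
    (forall i, \tr (A i *m adjmx (A i)) = ((s%:R * a i)%R)%:C) /\
    (forall i, \tr (B i *m adjmx (B i)) = ((s%:R * b i)%R)%:C).
Arguments Brac {R} d s a b.

(* Take direct sums: if (A_i, B_i) realize (alpha, beta) in size s and (M_i, N_i) realize
   (mu, nu) in size t, the block-diagonal matrices diag(A_i, M_i), diag(B_i, N_i) satisfy
   the three identities blockwise, and their squared Frobenius norms are
   s alpha_i + t mu_i and s beta_i + t nu_i, i.e. (s + t) times the weighted means. *)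
From HB Require Import structures.
From mathcomp Require Import all_boot all_order all_algebra.
From mathcomp Require Import complex.
From mathcomp Require Import reals.
Set Implicit Arguments. Unset Strict Implicit. Unset Printing Implicit Defensive.
Import Order.TTheory GRing.Theory Num.Theory.
Local Open Scope ring_scope.
Local Open Scope complex_scope.

Definition block_diag_mx (V : nmodType) s t (X : 'M[V]_s) (Y : 'M[V]_t) : 'M[V]_(s + t) :=
  block_mx X 0 0 Y.

Section BlockDiag.
Variable R : pzRingType.
Variables s t : nat.
Implicit Types (X : 'M[R]_s) (Y : 'M[R]_t).

Lemma mul_block_diag_mx X Y (X' : 'M[R]_s) (Y' : 'M[R]_t) :
  block_diag_mx X Y *m block_diag_mx X' Y' = block_diag_mx (X *m X') (Y *m Y').
Proof. by rewrite /block_diag_mx mulmx_block !mulmx0 !mul0mx !addr0 !add0r. Qed.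

Lemma block_diag_mx_sum I (r : seq I) (P : pred I) (F : I -> 'M[R]_s) (G : I -> 'M[R]_t) :
  \sum_(i <- r | P i) block_diag_mx (F i) (G i)
  = block_diag_mx (\sum_(i <- r | P i) F i) (\sum_(i <- r | P i) G i).
Proof.
elim/big_rec3: _ => [|i Z X Y _ ->]; first by rewrite /block_diag_mx block_mx0.
by rewrite /block_diag_mx add_block_mx !addr0.
Qed.

Lemma block_diag_mx0 : block_diag_mx (0 : 'M[R]_s) (0 : 'M[R]_t) = 0.
Proof. exact: block_mx0. Qed.

Lemma block_diag_scalar_mx (a : R) : block_diag_mx a%:M a%:M = a%:M :> 'M_(s + t).
Proof. by rewrite [RHS](scalar_mx_block s t). Qed.

Lemma mxtrace_block_diag X Y : \tr (block_diag_mx X Y) = \tr X + \tr Y.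
Proof. exact: mxtrace_block. Qed.

End BlockDiag.

Lemma adjmx_block_diag (R : rcfType) s t (X : 'M[R[i]]_s) (Y : 'M[R[i]]_t) :
  adjmx (block_diag_mx X Y) = block_diag_mx (adjmx X) (adjmx Y).
Proof.
rewrite /adjmx /block_diag_mx tr_block_mx map_block_mx !trmx0.
by congr block_mx; apply/matrixP => i j; rewrite !mxE /= raddf0.
Qed.

Lemma simplex_weighted_mean (R : realType) d (p q : R) (x y : 'I_d -> R) :
  0 <= p -> 0 <= q -> p + q != 0 -> simplex x -> simplex y ->
  simplex (fun i => (p * x i + q * y i) / (p + q)).
Proof.
move=> p0 q0 pq0 [x0 x1] [y0 y1]; split=> [i|].
  by rewrite divr_ge0 ?addr_ge0 ?mulr_ge0.
by rewrite -mulr_suml big_split /= -!mulr_sumr x1 y1 !mulr1 divff.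
Qed.

Definition realizes (R : realType) d s (a b : 'I_d -> R) (A B : 'I_d -> 'M[R[i]]_s) :=
  [/\ \sum_(i < d) A i *m adjmx (A i) = 1%:M,
      \sum_(i < d) B i *m adjmx (B i) = 1%:M,
      \sum_(i < d) A i *m adjmx (B i) = 0,
      forall i, \tr (A i *m adjmx (A i)) = (s%:R * a i)%:C
    & forall i, \tr (B i *m adjmx (B i)) = (s%:R * b i)%:C].

Lemma Brac_realizes (R : realType) d s (a b : 'I_d -> R) :
  Brac d s a b <->
  [/\ simplex a, simplex b & exists A B : 'I_d -> 'M[R[i]]_s, realizes a b A B].
Proof.
split=> [[sa [sb [A [B [AA [BB [AB [trA trB]]]]]]]]|[sa sb [A [B [AA BB AB trA trB]]]]].
  by split=> //; exists A, B.
by do 2!split=> //; exists A, B.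
Qed.

Section RealizesBlockDiag.
Variables (R : realType) (d s t : nat).
Hypothesis st_gt0 : (0 < s + t)%N.

Let mean (x y : 'I_d -> R) i := (s%:R * x i + t%:R * y i) / (s + t)%:R.

Lemma realizes_block_diag (a b m n : 'I_d -> R)
    (A B : 'I_d -> 'M[R[i]]_s) (M N : 'I_d -> 'M[R[i]]_t) :
  realizes a b A B -> realizes m n M N ->
  realizes (mean a m) (mean b n)
    (fun i => block_diag_mx (A i) (M i)) (fun i => block_diag_mx (B i) (N i)).
Proof.
move=> [AA BB AB trA trB] [MM NN MN trM trN].
have st0 : (s + t)%:R != 0 :> R by rewrite pnatr_eq0 -lt0n.
have tr_mean x y i : (s%:R * x i)%:C + (t%:R * y i)%:C = ((s + t)%:R * mean x y i)%:C.
  by rewrite /mean mulrCA mulfV // mulr1 rmorphD.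
split=> [|||i|i].
- by under eq_bigr do rewrite adjmx_block_diag mul_block_diag_mx;
    rewrite block_diag_mx_sum AA MM block_diag_scalar_mx.
- by under eq_bigr do rewrite adjmx_block_diag mul_block_diag_mx;
    rewrite block_diag_mx_sum BB NN block_diag_scalar_mx.
- by under eq_bigr do rewrite adjmx_block_diag mul_block_diag_mx;
    rewrite block_diag_mx_sum AB MN block_diag_mx0.
- by rewrite adjmx_block_diag mul_block_diag_mx mxtrace_block_diag trA trM tr_mean.
- by rewrite adjmx_block_diag mul_block_diag_mx mxtrace_block_diag trB trN tr_mean.
Qed.

End RealizesBlockDiag.

Theorem proposition3p5 (R : realType) (d s t : nat)
  (a b m n : 'I_d -> R) :
  (2 <= d)%N -> (1 <= s)%N -> (1 <= t)%N ->
  Brac d s a b -> Brac d t m n ->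
  Brac d (s + t)
    (fun i => (s%:R * a i + t%:R * m i) / (s + t)%:R)
    (fun i => (s%:R * b i + t%:R * n i) / (s + t)%:R).
Proof.
move=> _ s_gt0 _ /Brac_realizes[sa sb [A [B rAB]]] /Brac_realizes[sm sn [M [N rMN]]].
have st_gt0 : (0 < s + t)%N by rewrite ltn_addr.
have st0 : s%:R + t%:R != 0 :> R by rewrite -natrD pnatr_eq0 -lt0n.
apply/Brac_realizes; split.
- by rewrite natrD; apply: simplex_weighted_mean.
- by rewrite natrD; apply: simplex_weighted_mean.
exists (fun i => block_diag_mx (A i) (M i)), (fun i => block_diag_mx (B i) (N i)).
exact: realizes_block_diag.
Qed.
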